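(* Let $n\ge1$ and $m\in\mathbb{N}$. Let $\mathcal{Q}_m=\bigoplus_{t=0}^m H_t\subseteq H^2(\mathbb{T}^n)$ and let $p\in H_m$ be a homogeneous polynomial of degree $m$ with $\|p\|_2=1$. Then the operator $S_p=P_{\mathcal{Q}_m}T_p|_{\mathcal{Q}_m}$ admits a lift, i.e. there exists $\varphi\in\mathcal{S}(\mathbb{D}^n)$ with $S_p=P_{\mathcal{Q}_m}T_\varphi|_{\mathcal{Q}_m}$, if and only if $p$ is a unimodular constant multiple of a monomial.
   Context: $H_t\subseteq\mathbb{C}[z_1,\dots,z_n]$ is the space of homogeneous polynomials of degree $t$, viewed as a subspace of the Hardy space $H^2(\mathbb{T}^n)$ (closed subspace of $L^2(\mathbb{T}^n,\mu)$, $\mu$ normalized Lebesgue measure, of functions with Fourier coefficients supported in $\mathbb{Z}_+^n$); thus $\mathcal{Q}_m$ is the space of polynomials of degree at most $m$, which is invariant under all $T_{z_i}^*$. $\|\cdot\|_2$ is the $H^2$ norm, $T_\varphi f=\varphi f$, $P_{\mathcal{Q}_m}$ the orthogonal projection onto $\mathcal{Q}_m$, and $\mathcal{S}(\mathbb{D}^n)$ the closed unit ball of $H^\infty(\mathbb{D}^n)$ (sup norm). *)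

From HB Require Import structures.
From mathcomp Require Import all_boot all_order all_algebra.
From mathcomp Require Import all_classical all_reals all_analysis.
From mathcomp Require Import complex.
Set Implicit Arguments. Unset Strict Implicit. Unset Printing Implicit Defensive.
Import Order.TTheory GRing.Theory Num.Theory.
Import numFieldNormedType.Exports.
Local Open Scope classical_set_scope.
Local Open Scope ring_scope.

Definition mindex (n : nat) := {ffun 'I_n -> nat}.
Definition mdeg n (a : mindex n) : nat := (\sum_(i < n) a i)%N.

Definition mi_le n (N : nat) : seq (mindex n) :=
  [seq a <- [seq [ffun i => nat_of_ord (f i)] | f : {ffun 'I_n -> 'I_N.+1} <- enum {ffun 'I_n -> 'I_N.+1}]
     | (mdeg a <= N)%N].

Definition Cplx (R : realType) : numClosedFieldType := R[i].

Section Defs.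
Variables (R : realType) (n : nat).
Local Notation C := (Cplx R).

(* A (formal) power series / function in H^2(T^n) is given by its coefficients
   (its Fourier coefficients, supported in Z_+^n). *)
Definition coeffs := mindex n -> C.

Definition zpow (z : 'I_n -> C) (a : mindex n) : C := \prod_(i < n) z i ^+ a i.

Definition homog (m : nat) (p : coeffs) : Prop := forall a, mdeg a <> m -> p a = 0.

Definition inQ (m : nat) (q : coeffs) : Prop := forall a, (m < mdeg a)%N -> q a = 0.

Definition h2norm_homog (m : nat) (p : coeffs) : C :=
  sqrtC (\sum_(a <- mi_le n m | mdeg a == m) `|p a| ^+ 2).

Definition mulc (phi q : coeffs) : coeffs := fun a =>
  \sum_(b <- mi_le n (mdeg a) | [forall i, b i <= a i]%N)
     phi b * q [ffun i => (a i - b i)%N].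

(* Coefficients of P_{Q_m} (phi * q) *)
Definition PQmul (m : nat) (phi q : coeffs) : coeffs := fun a =>
  if (mdeg a <= m)%N then mulc phi q a else 0.

Definition psum (phi : coeffs) (z : 'I_n -> C) (N : nat) : C :=
  \sum_(a <- mi_le n N) phi a * zpow z a.

(* phi in S(D^n): power series converging absolutely on the open polydisc D^n
   (i.e. a holomorphic function on D^n) with sup norm <= 1. *)
Definition in_schur_ball (phi : coeffs) : Prop :=
  forall z : 'I_n -> C, (forall i, `|z i| < 1) ->
    (exists M : C, forall N, \sum_(a <- mi_le n N) `|phi a * zpow z a| <= M) /\
    (exists l : C, psum phi z @ \oo --> l /\ `|l| <= 1).

Definition unimod_monomial (p : coeffs) : Prop :=
  exists (c : C) (a0 : mindex n), `|c| = 1 /\ forall a, p a = if a == a0 then c else 0.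

End Defs.

(* If p = c z^a0 with |c| = 1, then p is its own lift, since |z^a0| <= 1 on the polydisc.
   Conversely, testing a lift phi against the constant 1 shows that phi and p have the same
   coefficients in degrees <= m.  For x on the unit circle, restrict phi to the line
   la |-> (la x^(B^0), ..., la x^(B^(n-1))) with B = m + 1: this is a power series in la
   bounded by 1 on the disc, so by the Cauchy estimate its m-th coefficient
   P(x) = \sum_a p_a x^(kronecker B a) has modulus at most 1.  Base-B digits are unique, so
   the exponents of P are distinct and the mean of |P|^2 over the circle is \sum_a |p_a|^2 = 1
   (Parseval, averaged over roots of unity of high order); hence |P| = 1 there.  The
   coefficient of P conj(P) at the distance between the highest and lowest exponents of P is
   then both nonzero and zero unless that distance vanishes: P, and with it p, is a monomial. *)

From Pilot Require Import Defs.
From HB Require Import structures.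
From mathcomp Require Import all_boot all_order all_algebra all_field.
From mathcomp Require Import all_classical all_reals all_analysis.
From mathcomp Require Import complex.
From mathcomp Require Import zify ring.
Import Order.TTheory GRing.Theory Num.Theory.
Import numFieldNormedType.Exports.
Local Open Scope classical_set_scope.
Local Open Scope ring_scope.

Definition kronecker (B : nat) {k} (f : 'I_k -> nat) : nat := \sum_(i < k) f i * B ^ i.

Lemma kronecker_recl B k (f : 'I_k.+1 -> nat) :
  kronecker B f = (f ord0 + B * kronecker B (fun i => f (lift ord0 i)))%N.
Proof.
rewrite /kronecker big_ord_recl /= expn0 muln1 big_distrr /=; congr (_ + _)%N.
by apply: eq_bigr => i _; rewrite /bump /= add1n expnS mulnCA.
Qed.

Lemma kronecker_inj B k (f g : 'I_k -> nat) :
  (forall i, f i < B)%N -> (forall i, g i < B)%N ->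
  kronecker B f = kronecker B g -> f =1 g.
Proof.
elim: k f g => [|k IH] f g ltfB ltgB; first by move=> _ [].
rewrite !kronecker_recl => Efg.
have B_gt0 : (0 < B)%N by apply: leq_ltn_trans (ltfB ord0).
have E0 : f ord0 = g ord0.
  have := congr1 (modn^~ B) Efg.
  by rewrite /= !(addnC (_ ord0)) !(mulnC B) !modnMDl !modn_small.
have Elift : kronecker B (fun i => f (lift ord0 i)) = kronecker B (fun i => g (lift ord0 i)).
  have := congr1 (divn^~ B) Efg.
  by rewrite /= !(addnC (_ ord0)) !(mulnC B) !divnMDl // !divn_small // !addn0.
move=> i; case: (unliftP ord0 i) => [j ->|-> //].
exact: (IH _ _ (fun _ => ltfB _) (fun _ => ltgB _) Elift).
Qed.

Lemma big_seq_only1 {T : eqType} {V : nmodType} {r : seq T} {x : T} (F : T -> V) :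
  uniq r -> x \in r -> {in r, forall y, y != x -> F y = 0} -> \sum_(y <- r) F y = F x.
Proof.
move=> r_uniq rx Fr0; rewrite (bigD1_seq x) //= big_seq_cond big1 ?addr0 //.
by move=> y /andP [ry yx]; apply: Fr0.
Qed.

Section MultiIndices.
Variable n : nat.

Definition mi_eq (m : nat) : seq (mindex n) := [seq a <- mi_le n m | mdeg a == m].

Lemma leq_mdeg (a : mindex n) i : (a i <= mdeg a)%N.
Proof. by rewrite /mdeg (bigD1 i) //= leq_addr. Qed.

Lemma mem_mi_le N (a : mindex n) : (a \in mi_le n N) = (mdeg a <= N)%N.
Proof.
rewrite mem_filter; apply/andb_idr => le_aN; apply/mapP.
exists [ffun i => inord (a i) : 'I_N.+1]; first by rewrite mem_enum.
by apply/ffunP => i; rewrite !ffunE inordK // ltnS (leq_trans (leq_mdeg a i)).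
Qed.

Lemma uniq_mi_le N : uniq (mi_le n N).
Proof.
rewrite filter_uniq // map_inj_uniq ?enum_uniq // => f g /ffunP Efg.
by apply/ffunP => i; apply/val_inj; have := Efg i; rewrite !ffunE.
Qed.

Lemma mem_mi_eq m (a : mindex n) : (a \in mi_eq m) = (mdeg a == m).
Proof. by rewrite mem_filter mem_mi_le; apply/andb_idr => /eqP ->. Qed.

Lemma uniq_mi_eq m : uniq (mi_eq m).
Proof. by rewrite filter_uniq // uniq_mi_le. Qed.

Lemma big_mi_le_mdeg (V : nmodType) N (F : mindex n -> V) :
  \sum_(a <- mi_le n N) F a = \sum_(k < N.+1) \sum_(a <- mi_eq k) F a.
Proof.
elim: N => [|N IH].
  rewrite big_ord1 /mi_eq (all_filterP _) //.
  by apply/allP => a; rewrite mem_mi_le leqn0.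
rewrite big_ord_recr /= -IH -big_cat; apply/perm_big/uniq_perm.
- exact: uniq_mi_le.
- rewrite cat_uniq uniq_mi_le uniq_mi_eq andbT /=; apply/hasPn => a.
  by rewrite mem_mi_eq mem_mi_le => /eqP ->; rewrite ltnn.
- by move=> a; rewrite mem_cat !mem_mi_le mem_mi_eq leq_eqVlt orbC ltnS.
Qed.

Lemma kronecker_inj_mi_eq m : {in mi_eq m &, injective (fun a : mindex n => kronecker m.+1 a)}.
Proof.
move=> a b; rewrite !mem_mi_eq => /eqP da /eqP db Eab; apply/ffunP.
have digit_a i : (a i < m.+1)%N by rewrite ltnS -da leq_mdeg.
have digit_b i : (b i < m.+1)%N by rewrite ltnS -db leq_mdeg.
exact: kronecker_inj digit_a digit_b Eab.
Qed.

End MultiIndices.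

Section PrimRootSums.
Variable F : idomainType.

Lemma sum_prim_root_expr (K t : nat) (z : F) : K.-primitive_root z ->
  \sum_(j < K) (z ^+ t) ^+ j = if (K %| t)%N then K%:R else 0.
Proof.
move=> zK; have zK1 : (z ^+ t) ^+ K = 1 by rewrite exprAC (prim_expr_order zK) expr1n.
case: ifP => [/dvdnP [u tE]|Kt].
  have -> : z ^+ t = 1 by rewrite tE mulnC exprM (prim_expr_order zK) expr1n.
  by under eq_bigr do rewrite expr1n; rewrite sumr_const card_ord.
have := subrX1 (z ^+ t) K; rewrite zK1 subrr => /esym/eqP.
by rewrite mulf_eq0 subr_eq0 -(prim_order_dvd zK) Kt => /eqP.
Qed.

Lemma sum_prim_root_filter K (th : F) m (c : nat -> F) r N :
  K.-primitive_root th ->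
  \sum_(j < K) (th ^+ j) ^+ (K - m) * \sum_(k < N.+1) c k * (r * th ^+ j) ^+ k =
  K%:R * \sum_(k < N.+1 | (K %| K - m + k)%N) c k * r ^+ k.
Proof.
move=> thK; under eq_bigr do rewrite big_distrr /=.
rewrite exchange_big big_distrr /= [RHS]big_mkcond; apply: eq_bigr => k _.
transitivity (c k * r ^+ k * \sum_(j < K) (th ^+ (K - m + k)) ^+ j).
  rewrite big_distrr /=; apply: eq_bigr => j _.
  by rewrite exprMn (exprAC th (K - m + k) j) exprD; ring.
by rewrite sum_prim_root_expr //; case: ifP => _; rewrite ?mulr0 // mulrC.
Qed.

End PrimRootSums.

Section RootsOfUnity.
Context {C : numClosedFieldType}.

Lemma prim_root_exists K : (0 < K)%N -> exists z : C, K.-primitive_root z.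
Proof.
move=> K_gt0; pose p : {poly C} := 'X^K - 1.
have [r Dp] := closed_field_poly_normal p.
rewrite (monicP _) ?monicXnsubC // scale1r in Dp.
have rn1 : all K.-unity_root r by apply/allP => z; rewrite -root_prod_XsubC -Dp.
have sz_r : (K < (size r).+1)%N by rewrite -(size_prod_XsubC r id) -Dp size_XnsubC.
have [|z _ ?] := hasP (cyclic.has_prim_root K_gt0 rn1 _ sz_r); last by exists z.
by rewrite -separable_prod_XsubC -Dp separable_Xn_sub_1 // pnatr_eq0 -lt0n.
Qed.

Lemma norm_prim_root {K} {z : C} : K.-primitive_root z -> `|z| = 1.
Proof.
move=> zK; apply/eqP; rewrite -(pexpr_eq1 (prim_order_gt0 zK)) //.
by rewrite -normrX (prim_expr_order zK) normr1.
Qed.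

Lemma conjC_prim_root_expr K (z : C) j v : K.-primitive_root z -> (v <= K)%N ->
  ((z ^+ j) ^+ v)^* = (z ^+ j) ^+ (K - v).
Proof.
move=> zK levK; set y := (z ^+ j) ^+ v.
have y1 : `|y| = 1 by rewrite !normrX (norm_prim_root zK) !expr1n.
have y_neq0 : y != 0 by rewrite -normr_eq0 y1 oner_eq0.
have -> : y^* = y^-1 by rewrite invC_norm y1 expr1n invr1 mul1r.
apply: (mulIf y_neq0); rewrite mulVf // -exprD subnK // exprAC.
by rewrite (prim_expr_order zK) expr1n.
Qed.

Lemma sum_prim_root_expr_conj K (z : C) u v : K.-primitive_root z ->
  (u < K)%N -> (v < K)%N ->
  \sum_(j < K) (z ^+ j) ^+ u * ((z ^+ j) ^+ v)^* = if u == v then K%:R else 0.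
Proof.
move=> zK ltuK ltvK.
under eq_bigr do rewrite (@conjC_prim_root_expr K z _ v zK (ltnW ltvK)) -exprD exprAC.
rewrite sum_prim_root_expr //; suff -> : (K %| u + (K - v))%N = (u == v) by [].
case: (ltngtP u v) => [ltuv|ltvu|<-]; last by rewrite subnKC ?dvdnn // ltnW.
  by rewrite gtnNdvd //; lia.
rewrite (_ : u + (K - v) = u - v + K)%N; last by lia.
by rewrite dvdn_addl ?dvdnn // gtnNdvd //; lia.
Qed.

End RootsOfUnity.

Section SparsePolynomial.
Variables (C : numClosedFieldType) (I : eqType) (s : seq I) (c : I -> C) (e : I -> nat).

Let P (x : C) := \sum_(a <- s) c a * x ^+ e a.

Lemma autocorrelation_prim_root K th d : K.-primitive_root th ->
  {in s, forall a, e a + d < K}%N ->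
  \sum_(j < K) P (th ^+ j) * (P (th ^+ j) * (th ^+ j) ^+ d)^* =
  K%:R * \sum_(a <- s) \sum_(b <- s) (e a == e b + d)%N%:R * (c a * (c b)^*).
Proof.
move=> thK ltK.
have expand (x : C) : P x * (P x * x ^+ d)^* =
    \sum_(a <- s) \sum_(b <- s) c a * (c b)^* * (x ^+ e a * (x ^+ (e b + d))^*).
  rewrite /P rmorphM rmorph_sum /= !big_distrl /=; apply: eq_bigr => a _.
  rewrite big_distrr /=; apply: eq_bigr => b _.
  by rewrite !rmorphM /= exprD rmorphM /=; ring.
under eq_bigr do rewrite expand.
rewrite exchange_big big_distrr /=; apply: eq_big_seq => a sa.
rewrite exchange_big big_distrr /=; apply: eq_big_seq => b sb.
rewrite -big_distrr /= sum_prim_root_expr_conj ?ltK //; last first.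
  exact: leq_ltn_trans (leq_addr d _) (ltK a sa).
by case: eqP => _; rewrite ?mulr1n ?mulr0n; ring.
Qed.

Lemma support_extremes : has (fun a => c a != 0) s ->
  exists a1 b0, [/\ a1 \in s, b0 \in s, c a1 != 0, c b0 != 0 &
    {in s, forall a, c a != 0 -> (e b0 <= e a <= e a1)%N}].
Proof.
move=> /hasP [a0 sa0 ca0].
pose supp k := has (fun a => (c a != 0) && (e a == k)) s.
have suppE a : a \in s -> c a != 0 -> supp (e a).
  by move=> sa ca; apply/hasP; exists a; rewrite ?ca ?eqxx.
have supp_le k : supp k -> (k <= \max_(a <- s) e a)%N.
  by case/hasP => a sa /andP [_ /eqP <-]; rewrite leq_bigmax_seq.
have [hi /hasP [a1 sa1 /andP [ca1 /eqP e_a1]] hi_max] :=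
  ex_maxnP (ex_intro supp _ (suppE a0 sa0 ca0)) supp_le.
have [lo /hasP [b0 sb0 /andP [cb0 /eqP e_b0]] lo_min] :=
  ex_minnP (ex_intro supp _ (suppE a0 sa0 ca0)).
exists a1, b0; split => // a sa ca; have := suppE a sa ca.
by rewrite e_a1 e_b0 => supp_a; rewrite lo_min ?hi_max.
Qed.

Hypotheses (s_uniq : uniq s) (e_inj : {in s &, injective e}).

Lemma parseval_prim_root K th : K.-primitive_root th -> {in s, forall a, e a < K}%N ->
  \sum_(j < K) `|P (th ^+ j)| ^+ 2 = K%:R * \sum_(a <- s) `|c a| ^+ 2.
Proof.
move=> thK ltK.
have ltK0 : {in s, forall a, e a + 0 < K}%N by move=> a; rewrite addn0; apply: ltK.
have := @autocorrelation_prim_root K th 0 thK ltK0.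
under eq_bigr do rewrite expr0 mulr1 -normCK.
move=> ->; congr (_ * _); apply: eq_big_seq => a sa.
rewrite (big_seq_only1 _ s_uniq sa) ?addn0 ?eqxx ?mul1r ?normCK // => b sb ba.
case: eqP => [Eab|_]; last by rewrite mul0r.
have Eba : b = a by apply: e_inj => //; rewrite Eab addn0.
by rewrite Eba eqxx in ba.
Qed.

Lemma norm_sparse_prim_root K th : K.-primitive_root th -> {in s, forall a, e a < K}%N ->
  \sum_(a <- s) `|c a| ^+ 2 = 1 -> (forall x, `|x| = 1 -> `|P x| <= 1) ->
  forall j : 'I_K, `|P (th ^+ j)| = 1.
Proof.
move=> thK ltK norm1 bound j.
have le1 (i : 'I_K) : 0 <= 1 - `|P (th ^+ i)| ^+ 2.
  by rewrite subr_ge0 expr_le1 // bound // normrX (norm_prim_root thK) expr1n.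
have sum0 : \sum_(i < K) (1 - `|P (th ^+ i)| ^+ 2) = 0.
  by rewrite sumrB parseval_prim_root // norm1 mulr1 sumr_const card_ord subrr.
have /eqP := @psumr_eq0P _ _ _ _ (fun i _ => le1 i) sum0 j isT.
by rewrite subr_eq0 eq_sym sqrp_eq1 // => /eqP.
Qed.

Lemma autocorrelation_extreme a1 b0 : a1 \in s -> b0 \in s -> c a1 != 0 ->
  {in s, forall a, c a != 0 -> (e b0 <= e a <= e a1)%N} ->
  \sum_(a <- s) \sum_(b <- s) (e a == e b + (e a1 - e b0))%N%:R * (c a * (c b)^*) =
  c a1 * (c b0)^*.
Proof.
move=> sa1 sb0 ca1 ext.
have extreme_pair a b : a \in s -> b \in s -> c a != 0 -> c b != 0 ->
    e a = (e b + (e a1 - e b0))%N -> a = a1 /\ b = b0.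
  move=> sa sb ca cb Eab; have /andP [lo_a hi_a] := ext a sa ca.
  have /andP [lo_b hi_b] := ext b sb cb.
  by split; apply: e_inj => //; lia.
have term0 a b : a \in s -> b \in s -> (a != a1) || (b != b0) ->
    (e a == e b + (e a1 - e b0))%N%:R * (c a * (c b)^*) = 0.
  move=> sa sb ab.
  have [->|ca] := eqVneq (c a) 0; first by rewrite mul0r mulr0.
  have [->|cb] := eqVneq (c b) 0; first by rewrite conjC0 !mulr0.
  case: eqP => [/eqP/eqP/(extreme_pair _ _ sa sb ca cb) [Ea Eb]|_]; last by rewrite mul0r.
  by move: ab; rewrite Ea Eb !eqxx.
rewrite (big_seq_only1 _ s_uniq sa1) => [|a sa na]; last first.
  by rewrite big1_seq // => b /andP [_ sb]; rewrite term0 // na.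
rewrite (big_seq_only1 _ s_uniq sb0) => [|b sb nb]; last by rewrite term0 // nb orbT.
have /andP [le_b0a1 _] := ext a1 sa1 ca1.
by rewrite subnKC // eqxx mul1r.
Qed.

Lemma sparse_monomial : \sum_(a <- s) `|c a| ^+ 2 = 1 ->
  (forall x, `|x| = 1 -> `|P x| <= 1) ->
  exists a0, [/\ a0 \in s, `|c a0| = 1 & {in s, forall a, a != a0 -> c a = 0}].
Proof.
move=> norm1 bound.
pose D := (\max_(a <- s) e a).+1.
have ltD a : a \in s -> (e a < D)%N by move=> sa; rewrite ltnS leq_bigmax_seq.
have [th thK] : exists th : C, (D + D).-primitive_root th.
  by apply: prim_root_exists; rewrite addn_gt0.
have unimod := norm_sparse_prim_root _ _ thK (fun a sa => ltn_addr D (ltD a sa)) norm1 bound.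
have [|a1 [b0 [sa1 sb0 ca1 cb0 ext]]] := support_extremes.
  apply/negPn/negP => /hasPn c0; move/eqP: norm1; rewrite eq_sym big_seq big1 ?oner_eq0 //.
  by move=> a /c0; rewrite negbK => /eqP ->; rewrite normr0 expr2 mul0r.
(* P conj(P) = 1 at the roots of unity, so its autocorrelation vanishes at every
   nonzero shift; at the extreme shift it is c a1 * conj (c b0) != 0. *)
have shift0 : (e a1 - e b0 = 0)%N.
  have ltK : {in s, forall a, e a + (e a1 - e b0) < D + D}%N.
    by move=> a sa; have := ltD a sa; have := ltD a1 sa1; lia.
  have := autocorrelation_prim_root _ _ _ thK ltK.
  rewrite autocorrelation_extreme // ?ext //.
  under eq_bigr do rewrite rmorphM mulrA -normCK unimod expr1n mul1r.
  rewrite (eq_bigr (fun j : 'I_(D + D) => (th ^+ j) ^+ 0 * ((th ^+ j) ^+ (e a1 - e b0))^*));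
    last by move=> j _; rewrite expr0 mul1r.
  rewrite sum_prim_root_expr_conj //; last by have := ltD a1 sa1; lia.
  case: eqP => // _ /eqP; rewrite eq_sym !mulf_eq0 pnatr_eq0 conjC_eq0 (negbTE ca1) (negbTE cb0).
  by rewrite addn_eq0 andbb.
have only_a1 a : a \in s -> a != a1 -> c a = 0.
  move=> sa; apply: contraNeq => ca; apply/eqP/e_inj => //.
  by have := ext a sa ca; have := ext a1 sa1 ca1; lia.
exists a1; split => //.
move: norm1; rewrite (big_seq_only1 _ s_uniq sa1) => [/eqP|a sa na]; last first.
  by rewrite only_a1 // normr0 expr2 mul0r.
by rewrite sqrp_eq1 // => /eqP.
Qed.

End SparsePolynomial.

Lemma filtered_sum_tail (F : numFieldType) (c : nat -> F) K m N (r s : F) :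
  (m < K)%N -> (m <= N)%N -> 0 <= r -> r <= s -> 0 < s ->
  `|\sum_(k < N.+1 | (K %| K - m + k)%N) c k * r ^+ k - c m * r ^+ m|
    <= (r / s) ^+ K * \sum_(k < N.+1) `|c k| * s ^+ k.
Proof.
move=> ltmK lemN r0 rs s_gt0; pose q := r / s.
have q0 : 0 <= q by rewrite divr_ge0 // ltW.
have q1 : q <= 1 by rewrite ler_pdivrMr // mul1r.
rewrite (bigD1 (Ordinal (leq_ltn_trans lemN (ltnSn N)))) /=; last by rewrite subnK ?dvdnn // ltnW.
rewrite addrC addrK; apply: le_trans (ler_norm_sum _ _ _) _.
rewrite big_distrr /= big_mkcond /=; apply: ler_sum => k _.
have tail_ge0 : 0 <= (r / s) ^+ K * (`|c k| * s ^+ k).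
  by rewrite !mulr_ge0 ?exprn_ge0 // ltW.
case: ifP => [/andP [dvdK] | _] //; rewrite -val_eqE /= => neq_km.
have leKk : (K <= k)%N.
  rewrite leqNgt; apply/negP => ltkK; move: dvdK.
  case: (ltngtP k m) => [ltkm|ltmk|Ekm]; last by rewrite Ekm eqxx in neq_km.
    by rewrite gtnNdvd //; lia.
  by rewrite (_ : K - m + k = k - m + K)%N ?(dvdn_addl _ (dvdnn K)) ?gtnNdvd //; lia.
have le_rk : r ^+ k <= q ^+ K * s ^+ k.
  rewrite -[r in r ^+ k](divfK (lt0r_neq0 s_gt0)) exprMn.
  by rewrite ler_wpM2r ?exprn_ge0 ?(ltW s_gt0) //; apply: ler_wiXn2l.
by rewrite normrM normrX (ger0_norm r0) mulrCA ler_wpM2l.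
Qed.

Lemma le1_of_mulr_expr_le1 (C : numClosedFieldType) (x : C) m : 0 <= x ->
  (forall r, 0 <= r -> r < 1 -> x * r ^+ m <= 1) -> x <= 1.
Proof.
move=> x0; have [->|m_gt0] := posnP m.
  by move/(_ 0 (lexx 0) ltr01); rewrite expr0 mulr1.
move=> le1; rewrite real_leNgt ?ger0_real //; apply/negP => gt1.
have x1_gt0 : 0 < 1 + x by rewrite addr_gt0 ?ltr01 // (lt_trans ltr01).
pose r := m.-root (2 / (1 + x)).
have r0 : 0 <= r by rewrite rootC_ge0 // divr_ge0 // ltW.
have rm : r ^+ m = 2 / (1 + x) by rewrite rootCK.
have r1 : r < 1.
  rewrite real_ltNge ?ger0_real //; apply/negP => /(exprn_ege1 m); rewrite rm.
  by rewrite ler_pdivlMr // mul1r -[2]/(1 + 1) lerD2l real_leNgt ?ger0_real // gt1.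
have := le1 r r0 r1; rewrite rm mulrA ler_pdivrMr // mul1r mulr_natr mulr2n lerD2r.
by rewrite real_leNgt ?ger0_real // gt1.
Qed.

Section CauchyEstimate.
Variable R : realType.
Local Notation C := (Cplx R).

Lemma expr_lt_small {q eps : C} : 0 <= q -> q < 1 -> 0 < eps -> exists K, q ^+ K < eps.
Proof.
move=> q0 q1 eps0.
have [qR epsR] : q \is Num.real /\ eps \is Num.real by split; [exact: ger0_real | exact: gtr0_real].
rewrite -(RRe_real qR) -(RRe_real epsR) in q0 q1 eps0 *.
rewrite -[0]/((0 : R)%:C%C) -[1]/((1 : R)%:C%C) ?lecR ?ltcR in q0 q1 eps0.
have := @cvg_expr R (complex.Re q); rewrite ger0_norm // => /(_ q1).
move=> /cvgr_dist_lt /(_ _ eps0) [K _ HK].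
exists K; rewrite -rmorphXn /= ltcR.
by have := HK K (leqnn K); rewrite sub0r normrN ger0_norm // exprn_ge0.
Qed.

Variable c : nat -> C.
Hypothesis c_abs : forall s : C, 0 <= s -> s < 1 ->
  exists M : C, forall N, \sum_(k < N.+1) `|c k| * s ^+ k <= M.
Hypothesis c_schur : forall la : C, `|la| < 1 ->
  exists l : C, (fun N => \sum_(k < N.+1) c k * la ^+ k) @ \oo --> l /\ `|l| <= 1.

Lemma cauchy_coef_filter m K r s M : (m < K)%N -> 0 <= r -> r < 1 -> r <= s -> 0 < s ->
  (forall N, \sum_(k < N.+1) `|c k| * s ^+ k <= M) ->
  `|c m| * r ^+ m <= 1 + (r / s) ^+ K * M.
Proof.
move=> ltmK r0 r1 rs s0 HM; apply/ler_addgt0Pr => eps eps0.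
have [th thK] : exists th : C, K.-primitive_root th.
  by apply: prim_root_exists; apply: leq_ltn_trans ltmK.
have la_lt1 (j : 'I_K) : `|r * th ^+ j| < 1.
  by rewrite normrM normrX (norm_prim_root thK) expr1n mulr1 ger0_norm.
have [L HL] := choice (fun j : 'I_K => c_schur _ (la_lt1 j)).
(* The weights w j = conj (th ^+ (j * m)) filter out the coefficients c k with k <> m mod K. *)
pose w (j : 'I_K) := (th ^+ j) ^+ (K - m).
have w1 j : `|w j| = 1 by rewrite !normrX (norm_prim_root thK) !expr1n.
pose T N := \sum_(j < K) w j * \sum_(k < N.+1) c k * (r * th ^+ j) ^+ k.
have Tl1 : `|\sum_(j < K) w j * L j| <= K%:R.
  apply: le_trans (ler_norm_sum _ _ _) _.
  apply: le_trans (_ : \sum_(j < K) (1 : C) <= _); last by rewrite sumr_const card_ord.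
  by apply: ler_sum => j _; rewrite normrM w1 mul1r; exact: (HL j).2.
have [N leNm close] : exists2 N, (m <= N)%N & `|\sum_(j < K) w j * L j - T N| <= K%:R * eps.
  have : \forall N \near \oo, forall j : 'I_K,
      `|L j - \sum_(k < N.+1) c k * (r * th ^+ j) ^+ k| < eps.
    by apply: filter_forall => j; apply: cvgr_dist_lt => //; exact: (HL j).1.
  case=> N0 _ HN0; exists (maxn N0 m); first exact: leq_maxr.
  rewrite /T -sumrB; apply: le_trans (ler_norm_sum _ _ _) _.
  apply: le_trans (_ : \sum_(j < K) eps <= _); last by rewrite sumr_const card_ord mulr_natl.
  apply: ler_sum => j _; rewrite -mulrBr normrM w1 mul1r.
  exact: ltW (HN0 _ (leq_maxl _ _) j).
have tail : `|\sum_(k < N.+1 | (K %| K - m + k)%N) c k * r ^+ k - c m * r ^+ m|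
    <= (r / s) ^+ K * M.
  apply: le_trans (@filtered_sum_tail _ c K m N r s ltmK leNm r0 rs s0) _.
  by apply: ler_wpM2l; rewrite ?exprn_ge0 ?divr_ge0 // ltW.
have K_gt0 : (0 : C) < K%:R by rewrite ltr0n (leq_ltn_trans _ ltmK).
have -> : `|c m| * r ^+ m = `|c m * r ^+ m| by rewrite normrM normrX (ger0_norm r0).
rewrite -(ler_pM2l K_gt0) -[X in X * _](normr_nat C K) -normrM.
have -> : K%:R * (c m * r ^+ m) = \sum_(j < K) w j * L j - (\sum_(j < K) w j * L j - T N)
    - K%:R * (\sum_(k < N.+1 | (K %| K - m + k)%N) c k * r ^+ k - c m * r ^+ m).
  by rewrite /T sum_prim_root_filter //; ring.
have -> : K%:R * (1 + (r / s) ^+ K * M + eps) = K%:R + K%:R * eps + K%:R * ((r / s) ^+ K * M).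
  by ring.
apply: le_trans (ler_normB _ _) _; apply: lerD.
  by apply: le_trans (ler_normB _ _) _; apply: lerD.
by rewrite normrM normr_nat ler_pM2l.
Qed.

Lemma cauchy_coef_radius m r : 0 <= r -> r < 1 -> `|c m| * r ^+ m <= 1.
Proof.
move=> r0 r1; pose s := (1 + r) / 2.
have s1 : s < 1 by rewrite ltr_pdivrMr // mul1r -[2]/(1 + 1) ltrD2l.
have rs : r < s by rewrite ltr_pdivlMr // mulrDr mulr1 -[1 + r]addrC ltrD2l.
have s0 : 0 < s := le_lt_trans r0 rs.
have [M HM] := c_abs s (ltW s0) s1.
have M0 : 0 <= M.
  by apply: le_trans (HM 0%N); rewrite big_ord1 mulr_ge0 ?exprn_ge0 // ltW.
have q0 : 0 <= r / s by rewrite divr_ge0 // ltW.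
have q1 : r / s < 1 by rewrite ltr_pdivrMr // mul1r.
apply/ler_addgt0Pr => eps eps0.
have eps' : 0 < eps / (M + 1) by rewrite divr_gt0 // ltr_wpDl.
have [K qK] := expr_lt_small q0 q1 eps'.
apply: le_trans (@cauchy_coef_filter m (K + m).+1 r s M _ r0 r1 (ltW rs) s0 HM) _.
  by rewrite ltnS leq_addl.
rewrite lerD2l; apply: le_trans (_ : (r / s) ^+ K * (M + 1) <= _); last first.
  by rewrite -ler_pdivlMr ?(ltr_wpDl M0 ltr01) // ltW.
apply: ler_pM; rewrite ?exprn_ge0 ?lerDl //.
by apply: ler_wiXn2l; [exact: q0 | exact: ltW q1 | exact: leqW (leq_addr m K)].
Qed.

Lemma cauchy_coef_le1 m : `|c m| <= 1.
Proof.
apply: le1_of_mulr_expr_le1 (normr_ge0 _) _ => r r0 r1.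
exact: cauchy_coef_radius.
Qed.

End CauchyEstimate.

Section Lift.
Variables (R : realType) (n : nat).
Local Notation C := (Cplx R).

Definition const1 : coeffs R n := fun a => (a == [ffun=> 0%N])%:R.

Lemma inQ_const1 m : inQ m const1.
Proof.
move=> a lt_m_a; rewrite /const1; case: eqP => // a0; move: lt_m_a.
by rewrite a0 /mdeg big1 // => i _; rewrite ffunE.
Qed.

Lemma mulc_const1 (f : coeffs R n) : Defs.mulc f const1 =1 f.
Proof.
move=> a; rewrite /Defs.mulc big_mkcond /=.
rewrite (big_seq_only1 _ (uniq_mi_le n _) (_ : a \in _)) ?mem_mi_le //.
  have -> : [forall i, a i <= a i]%N by apply/forallP => i.
  have -> : [ffun i => a i - a i]%N = [ffun=> 0%N] :> mindex n.
    by apply/ffunP => i; rewrite !ffunE subnn.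
  by rewrite /const1 eqxx mulr1.
move=> b _ ba; case: ifP => // /forallP le_ba; rewrite /const1.
case: eqP => [Eab|]; last by rewrite mulr0.
move/eqP: ba; case; apply/ffunP => i; apply/eqP; rewrite eqn_leq le_ba /=.
by have := congr1 (fun g : mindex n => g i) Eab; rewrite /= !ffunE => /eqP; rewrite subn_eq0.
Qed.

Lemma lift_coeffs m (p phi : coeffs R n) :
  (forall q, inQ m q -> PQmul m phi q = PQmul m p q) ->
  forall a, (mdeg a <= m)%N -> phi a = p a.
Proof.
move=> lift a le_am; have := congr1 (fun f => f a) (lift _ (inQ_const1 m)).
by rewrite /PQmul le_am !mulc_const1.
Qed.

Lemma zpow_scale (la : C) (z : 'I_n -> C) a :
  zpow (fun i => la * z i) a = la ^+ mdeg a * zpow z a.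
Proof. by rewrite /zpow /mdeg -prodrXr -big_split; apply: eq_bigr => i _; apply: exprMn. Qed.

Lemma zpow_kronecker B (x : C) (a : mindex n) :
  zpow (fun i => x ^+ (B ^ i)) a = x ^+ kronecker B a.
Proof. by rewrite /zpow /kronecker -prodrXr; apply: eq_bigr => i _; rewrite -exprM mulnC. Qed.

Lemma psum_line (phi : coeffs R n) (z : 'I_n -> C) (la : C) N :
  psum phi (fun i => la * z i) N =
  \sum_(k < N.+1) (\sum_(a <- mi_eq n k) phi a * zpow z a) * la ^+ k.
Proof.
rewrite /psum big_mi_le_mdeg; apply: eq_bigr => k _; rewrite big_distrl /=.
apply: eq_big_seq => a; rewrite mem_mi_eq => /eqP <-; rewrite zpow_scale; ring.
Qed.

Lemma schur_homog_part_le1 (phi : coeffs R n) (z : 'I_n -> C) k :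
  in_schur_ball phi -> (forall i, `|z i| = 1) ->
  `|\sum_(a <- mi_eq n k) phi a * zpow z a| <= 1.
Proof.
move=> phi_schur z1; apply: (@cauchy_coef_le1 R (fun k => \sum_(a <- mi_eq n k) phi a * zpow z a)).
- move=> s s0 s1; have lt1 i : `|s * z i| < 1 by rewrite normrM z1 mulr1 ger0_norm.
  have [[M HM] _] := phi_schur _ lt1; exists M => N; apply: le_trans (HM N).
  rewrite big_mi_le_mdeg; apply: ler_sum => j _.
  rewrite -(ger0_norm (exprn_ge0 j s0)) -normrM big_distrl /=.
  apply: le_trans (ler_norm_sum _ _ _) _.
  rewrite (eq_big_seq (fun a => `|phi a * zpow (fun i => s * z i) a|)) // => a.
  by rewrite mem_mi_eq => /eqP <-; rewrite zpow_scale; congr `|_|; ring.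
- move=> la la1; have lt1 i : `|la * z i| < 1 by rewrite normrM z1 mulr1.
  have [_ [l [cvg_l l1]]] := phi_schur _ lt1; exists l; split => //.
  by under eq_fun do rewrite -psum_line.
Qed.

Lemma monomial_in_schur_ball (p : coeffs R n) : unimod_monomial p -> in_schur_ball p.
Proof.
case=> c [a0 [c1 pE]] z z1.
have term a : p a * zpow z a = if a == a0 then c * zpow z a0 else 0.
  by rewrite pE; case: eqP => [->|]; rewrite ?mul0r.
have za0 : `|zpow z a0| <= 1.
  rewrite /zpow normr_prod; apply: prodr_ile1 => i _.
  by rewrite normr_ge0 normrX exprn_ile1 // ltW.
have psumE N : (mdeg a0 <= N)%N -> psum p z N = c * zpow z a0.
  move=> le_a0N; rewrite /psum (big_seq_only1 _ (uniq_mi_le n N) (_ : a0 \in _)) ?mem_mi_le //.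
    by rewrite term eqxx.
  by move=> a _ /negbTE na0; rewrite term na0.
split.
  exists 1 => N; have [le_a0N|lt_Na0] := leqP (mdeg a0) N.
    rewrite (big_seq_only1 _ (uniq_mi_le n N) (_ : a0 \in _)) ?mem_mi_le //.
      by rewrite term eqxx normrM c1 mul1r.
    by move=> a _ /negbTE na0; rewrite term na0 normr0.
  rewrite big1_seq ?ler01 // => a /andP [_]; rewrite mem_mi_le term.
  case: eqP => [->|_ _]; last by rewrite normr0.
  by rewrite leqNgt lt_Na0.
exists (c * zpow z a0); split; last by rewrite normrM c1 mul1r.
by apply: cvg_near_cst; exists (mdeg a0) => // N /= /psumE.
Qed.

End Lift.

Theorem theorem3p2 (R : realType) (n m : nat) (p : coeffs R n) :
  (0 < n)%N ->
  homog m p ->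
  h2norm_homog m p = 1 ->
  (exists phi : coeffs R n, in_schur_ball phi /\
     forall q : coeffs R n, inQ m q -> PQmul m phi q = PQmul m p q)
  <-> unimod_monomial p.
Proof.
move=> _ p_homog p_norm; split; last by exists p; split => //; exact: monomial_in_schur_ball.
case=> phi [phi_schur /lift_coeffs phi_p].
have norm1 : \sum_(a <- mi_eq n m) `|p a| ^+ 2 = 1.
  move: p_norm; rewrite /h2norm_homog /mi_eq big_filter => /(congr1 (fun x => x ^+ 2)).
  by rewrite sqrtCK expr1n.
have bound (x : Cplx R) : `|x| = 1 -> `|\sum_(a <- mi_eq n m) p a * x ^+ kronecker m.+1 a| <= 1.
  move=> x1; have z1 (i : 'I_n) : `|x ^+ (m.+1 ^ i)| = 1 by rewrite normrX x1 expr1n.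
  have := @schur_homog_part_le1 R n phi _ m phi_schur z1.
  congr (`|_| <= 1); apply: eq_big_seq => a; rewrite mem_mi_eq => /eqP am.
  by rewrite phi_p ?am // zpow_kronecker.
have [a0 [_ pa0 p0]] :=
  @sparse_monomial _ _ _ p _ (uniq_mi_eq n m) (@kronecker_inj_mi_eq n m) norm1 bound.
exists (p a0), a0; split => // a; case: eqP => [-> // | /eqP na0].
have [/eqP am | nam] := boolP (mdeg a == m); first by apply: p0; rewrite ?mem_mi_eq ?am.
by apply: p_homog; apply/eqP.
Qed.
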